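(* Let $2\le k<n$ be integers. For a probability vector $\lambda=(\lambda_1,\ldots,\lambda_n)$ define $\rho^P(\lambda)\in\mathbb{R}^n$ by $\rho^P(\lambda)_i=\frac1k\sum_{j=i}^{i+k-1}\lambda_j$, indices modulo $n$. Then every fiber of the map $\lambda\mapsto\rho^P(\lambda)$ (on probability vectors) that contains a pure state is a singleton; that is, if $e_m$ is a standard basis vector and $\mu$ is a probability vector with $\rho^P(\mu)=\rho^P(e_m)$, then $\mu=e_m$.
   Context: Probability vectors in $\mathbb{R}^n$ are identified with diagonal density matrices $\mathrm{diag}(\lambda_1,\dots,\lambda_n)$; the pure states among them are the standard basis vectors $e_m$ (i.e. $E_{mm}$). The map is the one induced by the POVM $(\tfrac1kQ_i)_{i=1}^n$, $Q_i$ the diagonal matrix with $1$ in positions $i,\ldots,i+k-1$ mod $n$. *)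

From HB Require Import structures.
From mathcomp Require Import all_boot all_order all_algebra.
From mathcomp Require Import reals.
Set Implicit Arguments. Unset Strict Implicit. Unset Printing Implicit Defensive.
Import Order.TTheory GRing.Theory Num.Theory.
Local Open Scope ring_scope.

Definition prob_vec (R : realType) (n : nat) (l : 'I_n -> R) : Prop :=
  (forall i, 0 <= l i) /\ \sum_(i < n) l i = 1.

Definition basis_vec (R : realType) (n : nat) (m : 'I_n) : 'I_n -> R :=
  fun i => if i == m then 1 else 0.

Lemma ord_pos (n : nat) (i : 'I_n) : (0 < n)%N.
Proof. by case: n i => [[]|]. Qed.

Definition cshift (n : nat) (i : 'I_n) (j : nat) : 'I_n :=
  Ordinal (ltn_pmod (i + j)%N (ord_pos i)).

Definition rhoP (R : realType) (n k : nat) (l : 'I_n -> R) : 'I_n -> R :=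
  fun i => k%:R^-1 * \sum_(j < k) l (cshift i j).

(* For 0 < k < n, the window of k cyclically consecutive indices starting
   just after m, or the one ending at j when j lies beyond it, contains a given
   j <> m but not m.  The component of rho^P(e_m) on such a window is 0, so a
   nonnegative mu with the same image vanishes on the whole window, hence at
   j; normalisation then forces mu m = 1. *)
From HB Require Import structures.
From mathcomp Require Import all_boot all_order all_algebra.
From mathcomp Require Import reals.
From mathcomp Require Import zify.
From mathcomp Require Import boolp.
Set Implicit Arguments. Unset Strict Implicit. Unset Printing Implicit Defensive.
Import Order.TTheory GRing.Theory Num.Theory.
Local Open Scope ring_scope.

Section CyclicShift.

Variable n : nat.
Implicit Types (i x y : 'I_n) (a b : nat).

Lemma cshiftD i a b : cshift (cshift i a) b = cshift i (a + b).
Proof. by apply: val_inj; rewrite /= modnDml addnA. Qed.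

Lemma cshift_neq i a : (0 < a < n)%N -> cshift i a != i.
Proof.
case/andP=> a_gt0 a_lt_n; apply/eqP => /(congr1 val) /= /eqP.
rewrite -{2}(modn_small (ltn_ord i)) -{2}[val i]addn0 eqn_modDl mod0n modn_small //.
by rewrite eqn0Ngt a_gt0.
Qed.

Lemma cshift_offset x y : x != y -> exists2 d, (0 < d < n)%N & x = cshift y d.
Proof.
move=> xy; have x_lt_n := ltn_ord x; have y_lt_n := ltn_ord y.
have neq : nat_of_ord x <> y by move=> /val_inj; apply/eqP.
exists ((x + n - y) %% n)%N.
  have [y_le_x | x_lt_y] := leqP y x.
    by rewrite -addnBAC // modnDr modn_small; [apply/andP; split|]; lia.
  by rewrite modn_small; [apply/andP; split|]; lia.
apply: val_inj; rewrite /= modnDmr.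
have -> : (y + (x + n - y) = x + n)%N by lia.
by rewrite modnDr modn_small.
Qed.

Lemma window_avoiding k x y : (0 < k < n)%N -> x != y ->
  exists i, (exists j : 'I_k, cshift i j = x) /\ forall j : 'I_k, cshift i j != y.
Proof.
case/andP=> k_gt0 k_lt_n /cshift_offset [d /andP[d_gt0 d_lt_n] ->].
(* the window of offsets [a, a + k) from y, where a = max(1, d - k + 1) *)
pose a := (d - k).+1.
have d_lt : (d - a < k)%N by rewrite /a; lia.
exists (cshift y a); split.
  by exists (Ordinal d_lt); rewrite cshiftD /= subnKC // /a; lia.
move=> j; rewrite cshiftD; apply: cshift_neq.
have := ltn_ord j; rewrite /a; lia.
Qed.

End CyclicShift.

Section RhoP.

Variables (R : realType) (n k : nat).

Lemma rhoP_basis_vec_eq0 (m i : 'I_n) :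
  (forall j : 'I_k, cshift i j != m) -> rhoP k (basis_vec R m) i = 0.
Proof.
by move=> avoid; rewrite /rhoP big1 ?mulr0 // => j _; rewrite /basis_vec ifN.
Qed.

Lemma rhoP_eq0_window (mu : 'I_n -> R) (i : 'I_n) :
  (0 < k)%N -> (forall j, 0 <= mu j) -> rhoP k mu i = 0 ->
  forall j : 'I_k, mu (cshift i j) = 0.
Proof.
move=> k_gt0 mu_ge0 /eqP; rewrite /rhoP mulf_eq0 invr_eq0 pnatr_eq0 gtn_eqF //.
by move=> /eqP sum0 j; apply: (psumr_eq0P _ sum0).
Qed.

End RhoP.

Lemma prob_vec_basis_vec (R : realType) (n : nat) (m : 'I_n) (mu : 'I_n -> R) :
  prob_vec mu -> (forall j, j != m -> mu j = 0) -> mu = basis_vec R m.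
Proof.
move=> [_ mu1] mu0; apply/funext => j; rewrite /basis_vec.
case: eqP => [->|/eqP]; last exact: mu0.
by move: mu1; rewrite (bigD1 m) //= big1 ?addr0.
Qed.

Theorem proposition5p3 (R : realType) (n k : nat) (hk2 : (2 <= k)%N)
  (hkn : (k < n)%N) (m : 'I_n) (mu : 'I_n -> R) :
  prob_vec mu -> rhoP k mu = rhoP k (basis_vec R m) -> mu = basis_vec R m.
Proof.
move=> mu_prob hrho; apply: prob_vec_basis_vec => // j jm.
have k_gt0 : (0 < k)%N by apply: leq_trans hk2.
have k_bounds : (0 < k < n)%N by rewrite k_gt0 hkn.
have [i [[j' <-] avoid]] := window_avoiding k_bounds jm.
apply: (rhoP_eq0_window k_gt0 mu_prob.1).
by rewrite hrho rhoP_basis_vec_eq0.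
Qed.
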